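(* Fix a monomial order on $S$. Let $J$ be a binomial ideal of $S$ and let $(E_i)_{i\in\Lambda}$ be a family of monomial ideals of $S$. Assume that for each $i\in\Lambda$, $F_i\supseteq E_i$ is a monomial ideal such that $(J,F_i)$ is a G-nice pair and $J+E_i=J+F_i$. Then $$\bigcap_{i\in\Lambda}(J+E_i)=J+\bigcap_{i\in\Lambda}\widehat{E_i}=J+\bigcap_{i\in\Lambda}F_i,$$ where each $\widehat{E_i}$ is taken with respect to $J$.
   Context: $K$ is a field and $S=K[x_1,\ldots,x_n]$ with a fixed monomial order. For $0\neq f\in S$, $\mathrm{in}(f)$ denotes its leading monomial; for an ideal $I$, $\mathrm{in}(I)$ is the ideal generated by the leading monomials of the nonzero elements of $I$. A pair $(J,E)$ of ideals is G-nice if $\mathrm{in}(J+E)=\mathrm{in}(J)+\mathrm{in}(E)$. A binomial ideal is an ideal generated by binomials. For an ideal $J$ and a monomial ideal $E$, $\widehat E$ (the G-nice monomial closure of $E$ with respect to $J$) is the intersection of all monomial ideals $F$ of $S$ with $E\subseteq F$ and $(J,F)$ G-nice. *)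

From mathcomp Require Import all_boot all_algebra.
From mathcomp Require Import mpoly.
Set Implicit Arguments. Unset Strict Implicit. Unset Printing Implicit Defensive.
Import GRing.Theory.
Local Open Scope ring_scope.

Section Defs.
Variables (n : nat) (K : fieldType).
Local Notation S := {mpoly K[n]}.
Local Notation mon := 'X_{1..n}.

(* Subsets of S (Prop-valued, to allow arbitrary intersections). *)
Definition pset := S -> Prop.
Definition psubset (A B : pset) := forall p, A p -> B p.
Definition pseteq (A B : pset) := forall p, A p <-> B p.

(* A monomial order: a total order on monomials, compatible with
   multiplication, with 1 as least element (hence a well-order). *)
Definition monomial_order (le : mon -> mon -> bool) : Prop :=
  [/\ (forall m, le m m),
      (forall m1 m2, le m1 m2 -> le m2 m1 -> m1 = m2),
      (forall m1 m2 m3, le m1 m2 -> le m2 m3 -> le m1 m3)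
      /\ (forall m1 m2, le m1 m2 || le m2 m1),
      (forall m1 m2 m3, le m1 m2 -> le (mnm_add m1 m3) (mnm_add m2 m3)) &
      (forall m, le (@mnm0 n) m)].

Definition is_ideal (I : pset) : Prop :=
  [/\ I 0, (forall a b, I a -> I b -> I (a + b)) & (forall r a, I a -> I (r * a))].

Definition ideal_gen (G : pset) : pset :=
  fun p => forall I, is_ideal I -> psubset G I -> I p.

Definition ideal_add (I J : pset) : pset :=
  fun p => exists a b, [/\ I a, J b & p = a + b].

Definition ideal_cap (L : Type) (I : L -> pset) : pset := fun p => forall i, I i p.

Definition is_monomial_ideal (E : pset) : Prop :=
  exists M : mon -> Prop, pseteq E (ideal_gen (fun p => exists2 m, M m & p = 'X_[m])).

Definition is_binomial (f : S) : Prop := (size (msupp f) <= 2)%N.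

Definition is_binomial_ideal (J : pset) : Prop :=
  exists B : pset, psubset B is_binomial /\ pseteq J (ideal_gen B).

Definition is_lead_mon (le : mon -> mon -> bool) (f : S) (m : mon) : Prop :=
  m \in msupp f /\ forall m', m' \in msupp f -> le m' m.

Definition init_ideal le (I : pset) : pset :=
  ideal_gen (fun p => exists m f, [/\ I f, f != 0, is_lead_mon le f m & p = 'X_[m]]).

Definition Gnice le (J E : pset) : Prop :=
  pseteq (init_ideal le (ideal_add J E)) (ideal_add (init_ideal le J) (init_ideal le E)).

Definition Gnice_closure le (J E : pset) : pset :=
  fun p => forall F, is_monomial_ideal F -> psubset E F -> Gnice le J F -> F p.

End Defs.

From mathcomp Require Import all_boot all_algebra.
From mathcomp Require Import mpoly.
From Stdlib Require Import Classical ClassicalEpsilon.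
Set Implicit Arguments. Unset Strict Implicit. Unset Printing Implicit Defensive.
Import GRing.Theory.

(* Every f is congruent modulo J to a reduced polynomial g, i.e. one none of
   whose monomials is divisible by a leading monomial of a nonzero element of
   J (division algorithm; it terminates because a monomial order is a
   well-order, which follows from Dickson's lemma).  If (J, F) is G-nice and
   F is a monomial ideal, a reduced element of J + F already lies in F: the
   part of g outside F would have a leading monomial in in(J + F) =
   in(J) + in(F), which is impossible.  Hence if f lies in every J + E_i, its
   reduced form lies in every admissible F containing E_i, i.e. in every
   closure of E_i.  This gives the cycle of inclusions
     cap (J + E_i) <= J + cap closure(E_i) <= J + cap F_i <= cap (J + E_i),
   the last two being immediate. *)

Definition holds (P : Prop) : bool := if excluded_middle_informative P then true else false.

Lemma holdsP (P : Prop) : reflect P (holds P).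
Proof. by rewrite /holds; case: excluded_middle_informative => h; constructor. Qed.

Lemma seq_max (T : eqType) (R : rel T) (R_total : forall x y, R x y || R y x)
    (R_trans : forall x y z, R x y -> R y z -> R x z) (s : seq T) (x0 : T) :
  x0 \in s -> exists2 x, x \in s & forall y, y \in s -> R y x.
Proof.
elim: s x0 => // a s IH x0 _.
have R_refl z : R z z by case/orP: (R_total z z).
case: s IH => [|b s] IH.
  by exists a; rewrite ?mem_seq1 // => y; rewrite mem_seq1 => /eqP ->.
have [x xs xmax] := IH b (mem_head b s).
case/orP: (R_total a x) => [ax | xa].
  exists x; first by rewrite inE xs orbT.
  by move=> y; rewrite inE => /orP [/eqP -> | /xmax].
exists a; first exact: mem_head.
by move=> y; rewrite inE => /orP [/eqP -> | /xmax yx]; last exact: R_trans yx xa.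
Qed.

Section Dickson.
Variable n : nat.
Local Notation mon := 'X_{1..n}.

Definition finite_cover (k : nat) (A : mon -> Prop) (s : seq mon) : Prop :=
  (forall b, b \in s -> A b) /\
  forall a, A a -> exists2 b, b \in s & forall i : 'I_n, (i < k)%N -> (b i <= a i)%N.

(* The k-th coordinate of a monomial (0 when k >= n). *)
Definition coord (k : nat) (a : mon) : nat := nth 0%N a k.

Lemma coordE k (a : mon) (i : 'I_n) : val i = k -> a i = coord k a.
Proof. by move=> <-; rewrite /coord (mnm_nth 0%N). Qed.

Section Step.
Variable k : nat.
Hypothesis cover_k : forall A, exists s, finite_cover k A s.

(* Elements of A whose k-th coordinate is below N are finitely covered in the
   first k+1 coordinates: cover each of the finitely many slices separately. *)
Lemma dickson_slices (A : mon -> Prop) N :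
  exists s, finite_cover k.+1 (fun a => A a /\ (coord k a < N)%N) s.
Proof.
elim: N => [|N [s [sA sP]]]; first by exists [::]; split => // a [].
have [t [tA tP]] := cover_k (fun a => A a /\ coord k a = N).
exists (s ++ t); split.
  move=> b; rewrite mem_cat => /orP [/sA [Ab bN] | /tA [Ab ->]]; split => //.
  exact: ltnW.
move=> a [Aa]; rewrite ltnS leq_eqVlt => /orP [/eqP aN | aN]; last first.
  by have [b bs ba] := sP a (conj Aa aN); exists b; rewrite // mem_cat bs.
have [b bt ba] := tP a (conj Aa aN).
exists b; first by rewrite mem_cat bt orbT.
move=> i; rewrite ltnS leq_eqVlt => /orP [/eqP ik | /ba //].
by have [_ bN] := tA b bt; rewrite !(coordE _ ik) bN aN.
Qed.

(* Cover A in k coordinates by s0; beyond the largest k-th coordinate N of s0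
   this is already a cover in k+1 coordinates, and below N use the slices. *)
Lemma dickson_succ (A : mon -> Prop) : exists s, finite_cover k.+1 A s.
Proof.
have [s0 [s0A s0P]] := cover_k A.
pose N := \max_(b <- s0) coord k b.
have [s [sA sP]] := dickson_slices A N.
exists (s0 ++ s); split.
  by move=> b; rewrite mem_cat => /orP [/s0A // | /sA []].
move=> a Aa; case: (ltnP (coord k a) N) => aN.
  by have [b bs ba] := sP a (conj Aa aN); exists b; rewrite // mem_cat bs orbT.
have [b bs0 ba] := s0P a Aa.
exists b; first by rewrite mem_cat bs0.
move=> i; rewrite ltnS leq_eqVlt => /orP [/eqP ik | /ba //].
rewrite !(coordE _ ik); apply: leq_trans aN.
exact: (@leq_bigmax_seq _ s0 xpredT (coord k) b).
Qed.
End Step.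

Lemma dickson (A : mon -> Prop) :
  exists2 s : seq mon, (forall b, b \in s -> A b) &
    forall a, A a -> exists2 b, b \in s & (b <= a)%MM.
Proof.
have cover_all k : forall B, exists s, finite_cover k B s.
  elim: k => [|k IH] B; last exact: dickson_succ.
  case: (classic (exists a, B a)) => [[a Ba] | noB].
    exists [:: a]; split => [b | a' _]; last by exists a; rewrite ?mem_seq1.
    by rewrite mem_seq1 => /eqP ->.
  by exists [::]; split => // a Ba; case: noB; exists a.
have [s [sA sP]] := cover_all n A.
exists s => // a /sP [b bs ba]; exists b => //.
by apply/mnm_lepP => i; apply: ba.
Qed.
End Dickson.

Section MonomialOrder.
Variables (n : nat) (le : 'X_{1..n} -> 'X_{1..n} -> bool).
Hypothesis hle : monomial_order le.
Local Notation mon := 'X_{1..n}.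

Lemma le_anti m1 m2 : le m1 m2 -> le m2 m1 -> m1 = m2.
Proof. by case: hle => _ anti _ _ _; apply: anti. Qed.

Lemma le_trans m1 m2 m3 : le m1 m2 -> le m2 m3 -> le m1 m3.
Proof. by case: hle => _ _ [trans _] _ _; apply: trans. Qed.

Lemma le_total m1 m2 : le m1 m2 || le m2 m1.
Proof. by case: hle => _ _ [_ total] _ _. Qed.

Lemma le_addr m1 m2 m3 : le m1 m2 -> le (m1 + m3)%MM (m2 + m3)%MM.
Proof. by case: hle => _ _ _ addr _; apply: addr. Qed.

(* A monomial order refines divisibility, since 1 is its least element. *)
Lemma le_of_divides b a : (b <= a)%MM -> le b a.
Proof.
move=> ba; rewrite -(submK ba) -{1}[b]add0m; apply: le_addr.
by case: hle.
Qed.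

(* Every nonempty set of monomials has a least element: by Dickson's lemma it
   suffices to take the least element of a finite divisibility basis. *)
Lemma le_min_exists (A : mon -> Prop) a0 : A a0 ->
  exists2 b, A b & forall a, A a -> le b a.
Proof.
move=> Aa0; have [s sA sP] := dickson A.
have [b0 b0s _] := sP a0 Aa0.
have [b bs bmin] := @seq_max _ (fun x y => le y x)
  (fun x y => le_total y x) (fun x y z xy yz => le_trans yz xy) s b0 b0s.
exists b; first exact: sA.
by move=> a /sP [c cs ca]; apply: le_trans (bmin c cs) (le_of_divides ca).
Qed.

Definition lt (x y : mon) : bool := le x y && (x != y).

Lemma lt_wf : well_founded lt.
Proof.
move=> x; apply: NNPP => x_notAcc.
have [b b_notAcc bmin] := le_min_exists (A := fun y => ~ Acc lt y) x_notAcc.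
apply: b_notAcc; constructor => y /andP [yb y_neq_b]; apply: NNPP => y_notAcc.
by move: y_neq_b; rewrite (le_anti yb (bmin _ y_notAcc)) eqxx.
Qed.

Lemma lead_mon_exists (K : fieldType) (p : {mpoly K[n]}) :
  (p != 0)%R -> exists m, is_lead_mon le p m.
Proof.
rewrite -msupp_eq0; case E: (msupp p) => [//|a s] _.
have [m ms mmax] := seq_max le_total le_trans (mem_head a s).
by exists m; rewrite /is_lead_mon E.
Qed.
End MonomialOrder.

Section Ideals.
Variables (n : nat) (K : fieldType).
Local Notation S := {mpoly K[n]}.
Local Notation mon := 'X_{1..n}.
Local Open Scope ring_scope.

Lemma ideal_gen_is_ideal (G : pset n K) : is_ideal (ideal_gen G).
Proof.
split=> [I [] // | a b Ga Gb I hI sG | r a Ga I hI sG]; case: (hI) => _ hD hM.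
  by apply: hD; [apply: Ga | apply: Gb].
by apply: hM; apply: Ga.
Qed.

Lemma ideal_gen_in (G : pset n K) p : G p -> ideal_gen G p.
Proof. by move=> Gp I _ sG; apply: sG. Qed.

Lemma generated_is_ideal (I G : pset n K) : pseteq I (ideal_gen G) -> is_ideal I.
Proof.
move=> IG; have [h0 hD hM] := ideal_gen_is_ideal G; split.
- exact/IG.
- by move=> a b /IG Ia /IG Ib; apply/IG; apply: hD.
- by move=> r a /IG Ia; apply/IG; apply: hM.
Qed.

Section IdealOps.
Variable I : pset n K.
Hypothesis hI : is_ideal I.

Lemma idealD a b : I a -> I b -> I (a + b). Proof. by case: hI => _ h _; apply: h. Qed.
Lemma idealM r a : I a -> I (r * a). Proof. by case: hI => _ _ h; apply: h. Qed.
Lemma idealB a b : I a -> I b -> I (a - b).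
Proof. by move=> Ia Ib; apply: idealD => //; rewrite -mulN1r; apply: idealM. Qed.

Lemma ideal_sum (T : Type) (r : seq T) (P : pred T) (F : T -> S) :
  (forall i, P i -> I (F i)) -> I (\sum_(i <- r | P i) F i).
Proof. by move=> IF; elim/big_rec: _ => [|i p Pi Ip]; [case: hI | apply: idealD; auto]. Qed.
End IdealOps.

Definition mon_multiple (M : mon -> Prop) (k : mon) : Prop :=
  exists2 m, M m & (m <= k)%MM.

Lemma mon_multiple_trans (M M' : mon -> Prop) k :
  (forall l, M' l -> mon_multiple M l) -> mon_multiple M' k -> mon_multiple M k.
Proof.
move=> M'M [l /M'M [m Mm ml] lk].
by exists m => //; apply: lepm_trans ml lk.
Qed.

Lemma ideal_gen_supp (G : pset n K) (M : mon -> Prop) p k :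
  (forall q, G q -> exists2 m, M m & q = 'X_[m]) ->
  ideal_gen G p -> k \in msupp p -> mon_multiple M k.
Proof.
move=> GM Gp; move: k; apply: (Gp (fun q => forall k, k \in msupp q -> mon_multiple M k)).
- split=> [k | a b Ha Hb k /msuppD_le | r a Ha k /msuppM_le /allpairsP].
  + by rewrite msupp0.
  + by rewrite mem_cat => /orP [/Ha | /Hb].
  + move=> [[x y] /= [_ ya ->]]; have [m Mm my] := Ha y ya.
    by exists m => //; apply: lepm_trans my (lem_addl _ _).
- move=> q /GM [m Mm ->] k; rewrite msuppX mem_seq1 => /eqP ->.
  by exists m => //; apply: lepm_refl.
Qed.

Definition lead_mons le (I : pset n K) (m : mon) : Prop :=
  exists f, [/\ I f, f != 0 & is_lead_mon le f m].

Lemma init_ideal_supp le (I : pset n K) p k :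
  init_ideal le I p -> k \in msupp p -> mon_multiple (lead_mons le I) k.
Proof.
apply: ideal_gen_supp => q [m [f [If fn lf ->]]].
by exists m => //; exists f.
Qed.

Section MonomialIdeal.
Variables (F : pset n K) (M : mon -> Prop).
Hypothesis FM : pseteq F (ideal_gen (fun p => exists2 m, M m & p = 'X_[m])).

Lemma monomial_ideal_term k c : mon_multiple M k -> F (c *: 'X_[k]).
Proof.
move=> [m Mm mk]; apply/FM; rewrite -(submK mk) mpolyXD -mul_mpolyC mulrA.
by apply: (idealM (ideal_gen_is_ideal _)); apply: ideal_gen_in; exists m.
Qed.

Lemma monomial_ideal_lead le l : lead_mons le F l -> mon_multiple M l.
Proof. by move=> [f [/FM Ff _ [lf _]]]; exact: (ideal_gen_supp (fun q Gq => Gq) Ff lf). Qed.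
End MonomialIdeal.
End Ideals.

Section NormalForm.
Variables (n : nat) (K : fieldType) (le : 'X_{1..n} -> 'X_{1..n} -> bool).
Hypothesis hle : monomial_order le.
Variable J : pset n K.
Hypothesis hJ : is_ideal J.
Local Notation S := {mpoly K[n]}.
Local Notation mon := 'X_{1..n}.
Local Open Scope ring_scope.

Definition reducible (k : mon) : Prop := mon_multiple (lead_mons le J) k.

Definition reduced (g : S) : Prop := forall k, k \in msupp g -> ~ reducible k.

Definition has_normal_form (g : S) : Prop := exists j r, [/\ J j, g = j + r & reduced r].

(* Subtracting a suitable multiple of h (lead monomial l dividing k0) cancels
   the largest reducible monomial k0 of g without creating reducible
   monomials that are not smaller than k0. *)
Lemma cancel_top (g : S) k0 : k0 \in msupp g -> reducible k0 ->
    (forall k, k \in msupp g -> reducible k -> le k k0) ->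
  exists j g', [/\ J j, g = j + g' & forall k, k \in msupp g' -> reducible k -> lt le k k0].
Proof.
move=> k0g [l [h [Jh hn [lh lmax]]] lk0] k0max.
set d := (k0 - l)%MM; set h' := h * 'X_[d]; set c := g@_k0 / h@_l.
have k0E : k0 = (d + l)%MM by rewrite /d submK.
have h'_k0 : h'@_k0 = h@_l by rewrite k0E mcoeffMX.
have h'_le y : y \in msupp h' -> le y k0.
  by rewrite (perm_mem (msuppMX _ _)) => /mapP [x /lmax xl ->]; rewrite k0E ![(d + _)%MM]addmC le_addr.
have coefE z : (g - c *: h')@_z = g@_z - c * h'@_z by rewrite mcoeffB mcoeffZ.
have g'_lt y : y \in msupp (g - c *: h') -> reducible y -> lt le y k0.
  move=> yg' ry; have yk0 : le y k0.
    apply: contraT => nle.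
    have h'y : h'@_y = 0 by apply/eqP; rewrite mcoeff_eq0; apply: contra nle; apply: h'_le.
    have yg : y \in msupp g by move: yg'; rewrite !mcoeff_msupp coefE h'y mulr0 subr0.
    by rewrite (k0max y yg ry) in nle.
  rewrite /lt yk0; apply/eqP => yE; move: yg'.
  by rewrite yE mcoeff_msupp coefE h'_k0 divfK ?subrr ?eqxx // -mcoeff_msupp.
exists (c *: h'), (g - c *: h'); split=> //; last by rewrite addrC subrK.
by rewrite -mul_mpolyC /h' mulrA mulrC; do 2 apply: (idealM hJ).
Qed.

Lemma reduce_step (g : S) : reduced g \/
  exists k0 j g', [/\ k0 \in msupp g, reducible k0, J j, g = j + g' &
                     forall k, k \in msupp g' -> reducible k -> lt le k k0].
Proof.
case: (classic (exists2 k, k \in msupp g & reducible k)) => [[k kg rk] | noRed].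
  right; pose red := [seq y <- msupp g | holds (reducible y)].
  have kred : k \in red by rewrite mem_filter kg andbT; apply/holdsP.
  have [k0] := seq_max (le_total hle) (le_trans hle) kred.
  rewrite mem_filter => /andP [/holdsP rk0 k0g] k0max.
  have [j [g' [Jj gE g'lt]]] : exists j g', [/\ J j, g = j + g' &
      forall k, k \in msupp g' -> reducible k -> lt le k k0].
    apply: cancel_top => // y yg ry; apply: k0max.
    by rewrite mem_filter yg andbT; apply/holdsP.
  by exists k0, j, g'.
by left => k kg rk; apply: noRed; exists k.
Qed.

Lemma normal_formD (j g : S) : J j -> has_normal_form g -> has_normal_form (j + g).
Proof.
move=> Jj [j' [r [Jj' -> rr]]].
by exists (j + j'), r; rewrite addrA; split => //; apply: (idealD hJ).
Qed.

Lemma reduced_normal_form (g : S) : reduced g -> has_normal_form g.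
Proof. by move=> rg; exists 0, g; rewrite add0r; split => //; case: hJ. Qed.

(* Termination of reduction: induction along the well-founded order on the
   bound for the reducible monomials of g. *)
Lemma normal_form_below m : forall g : S,
  (forall k, k \in msupp g -> reducible k -> lt le k m) -> has_normal_form g.
Proof.
elim/(well_founded_induction (lt_wf hle)): m => m IH g gm.
case: (reduce_step g) => [/reduced_normal_form // |].
move=> [k0 [j [g' [k0g rk0 Jj -> g'k0]]]].
by apply: normal_formD => //; apply: IH (gm _ k0g rk0) _ g'k0.
Qed.

Lemma normal_form (g : S) : has_normal_form g.
Proof.
case: (reduce_step g) => [/reduced_normal_form // |].
move=> [k0 [j [g' [_ _ Jj -> g'k0]]]].
by apply: normal_formD => //; apply: normal_form_below g'k0.
Qed.
End NormalForm.

Section Restriction.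
Variables (n : nat) (K : fieldType).
Local Notation S := {mpoly K[n]}.
Local Notation mon := 'X_{1..n}.
Local Open Scope ring_scope.

Definition mpoly_restrict (P : pred mon) (g : S) : S :=
  \sum_(k <- msupp g | P k) g@_k *: 'X_[k].

Lemma mpoly_restrict_split (P : pred mon) (g : S) :
  g = mpoly_restrict P g + mpoly_restrict (predC P) g.
Proof. by rewrite {1}(mpolyE g) (bigID P). Qed.

Lemma msupp_restrict (P : pred mon) (g : S) k :
  k \in msupp (mpoly_restrict P g) -> k \in msupp g /\ P k.
Proof.
move=> /msupp_sum_le /flattenP [s /mapP [k']]; rewrite mem_filter => /andP [Pk' k'g] ->.
by move=> /msuppZ_le; rewrite msuppX mem_seq1 => /eqP ->.
Qed.
End Restriction.

Section GNice.
Variables (n : nat) (K : fieldType) (le : 'X_{1..n} -> 'X_{1..n} -> bool).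
Hypothesis hle : monomial_order le.
Variable J : pset n K.
Hypothesis hJ : is_ideal J.
Local Open Scope ring_scope.

(* Write g = g1 + g2 where g1 collects the terms whose monomials
   lie in F; if g2 <> 0, its leading monomial lies in in(J + F) = in(J) + in(F),
   so it is either reducible (impossible, g is reduced) or in F (impossible by
   construction of g2). *)
Lemma reduced_in_Gnice (F : pset n K) (g : {mpoly K[n]}) :
  is_monomial_ideal F -> Gnice le J F ->
  reduced le J g -> ideal_add J F g -> F g.
Proof.
move=> [M FM] nice rg [a [b [Ja Fb gE]]].
have hF : is_ideal F := generated_is_ideal FM.
pose inF k := holds (mon_multiple M k).
pose g1 := mpoly_restrict inF g; pose g2 := mpoly_restrict (predC inF) g.
have Fg1 : F g1.
  apply: (ideal_sum hF) => k /holdsP Mk.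
  exact: monomial_ideal_term FM _ _ Mk.
suff g2_0 : g2 = 0 by rewrite (mpoly_restrict_split inF g) -/g2 g2_0 addr0.
apply/eqP; apply: contraT => g2n; exfalso.
have [m [mg2 mmax]] := lead_mon_exists hle g2n.
have [mg /holdsP notM] := msupp_restrict mg2.
have Jg2 : ideal_add J F g2.
  exists a, (b - g1); split => //; first exact: (idealB hF).
  by rewrite addrA -gE {1}(mpoly_restrict_split inF g) addrAC subrr add0r.
have init_m : init_ideal le (ideal_add J F) 'X_[m].
  by apply: ideal_gen_in; exists m, g2; split.
have [a' [b' [inJa' inFb' e]]] := (nice _).1 init_m.
have : m \in msupp ('X_[m] : {mpoly K[n]}) by rewrite msuppX mem_seq1.
rewrite e => /msuppD_le; rewrite mem_cat => /orP [ma' | mb'].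
  exact: rg mg (init_ideal_supp inJa' ma').
apply: notM; apply: mon_multiple_trans (init_ideal_supp inFb' mb').
exact: (monomial_ideal_lead FM (le := le)).
Qed.

Lemma reduced_in_closure (E : pset n K) g :
  reduced le J g -> ideal_add J E g -> Gnice_closure le J E g.
Proof.
move=> rg [a [b [Ja Eb gE]]] F hF EF nice.
by apply: reduced_in_Gnice => //; exists a, b; split => //; apply: EF.
Qed.
(* The key inclusion: if f lies in every J + E_i, its normal form modulo J
   lies in every closure of E_i. *)
Lemma cap_sub_closure (L : Type) (E : L -> pset n K) :
  psubset (ideal_cap (fun i => ideal_add J (E i)))
          (ideal_add J (ideal_cap (fun i => Gnice_closure le J (E i)))).
Proof.
move=> f fE; have [j [g [Jj fjg rg]]] := normal_form hle hJ f.
exists j, g; split => // i; apply: reduced_in_closure rg _.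
have [a [b [Ja Eb fab]]] := fE i.
exists (a - j), b; split; [exact: idealB | by [] |].
by rewrite addrAC -fab fjg [j + g]addrC addrK.
Qed.
End GNice.

Theorem mainTheorem13 (n : nat) (K : fieldType)
  (le : 'X_{1..n} -> 'X_{1..n} -> bool) (hle : monomial_order le)
  (J : pset n K) (hJ : is_binomial_ideal J)
  (L : Type) (E F : L -> pset n K)
  (hE : forall i, is_monomial_ideal (E i))
  (hF : forall i, is_monomial_ideal (F i))
  (hEF : forall i, psubset (E i) (F i))
  (hnice : forall i, Gnice le J (F i))
  (hsum : forall i, pseteq (ideal_add J (E i)) (ideal_add J (F i))) :
  pseteq (ideal_cap (fun i => ideal_add J (E i)))
         (ideal_add J (ideal_cap (fun i => Gnice_closure le J (E i))))
  /\ pseteq (ideal_add J (ideal_cap (fun i => Gnice_closure le J (E i))))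
            (ideal_add J (ideal_cap F)).
Proof.
have [B [_ JB]] := hJ; have J_ideal : is_ideal J := generated_is_ideal JB.
(* The three sets form a cycle of inclusions; only the first needs normal
   forms, the others hold termwise. *)
have closure_to_F : psubset (ideal_add J (ideal_cap (fun i => Gnice_closure le J (E i))))
    (ideal_add J (ideal_cap F)).
  (* each F_i is one of the ideals intersected in the closure of E_i *)
  move=> f [j [c [Jj Cc ->]]]; exists j, c; split => // i.
  exact: Cc i _ (hF i) (hEF i) (hnice i).
have F_to_cap : psubset (ideal_add J (ideal_cap F)) (ideal_cap (fun i => ideal_add J (E i))).
  by move=> f [j [c [Jj Fc ->]]] i; apply/hsum; exists j, c.
have cap_to_closure := cap_sub_closure hle J_ideal (E := E).
by split => f; split; auto.
Qed.
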